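(* Let $d\ge3$, $\Omega=\{1,\ldots,d\}$, and $F\le F'\le\mathrm{Sym}(\Omega)$ with $F'$ preserving the orbits of $F$, and suppose $F'$ acts 2-transitively on $\Omega$. Then $G(F,F')$ acts transitively on geodesic segments of any fixed finite length in $T$: for any two geodesic segments $[x_1,x_n]$ and $[x_1',x_n']$ in $T$ (with consecutive vertices $x_1,\ldots,x_n$ and $x_1',\ldots,x_n'$) there exists $g\in G(F,F')$ with $g(x_i)=x_i'$ for all $i$.
   Context: Let $T=\mathcal{T}_d$ be the $d$-regular tree with a fixed edge coloring $c\colon E(T)\to\Omega$ whose restriction $c_v$ to the edges $E(v)$ at each vertex $v$ is a bijection onto $\Omega$. For $g\in\mathrm{Aut}(T)$, $\sigma(g,v)=c_{gv}\circ g_v\circ c_v^{-1}$ with $g_v\colon E(v)\to E(gv)$ induced by $g$. $U(F')=\{g:\sigma(g,v)\in F'\ \forall v\}$, $G(F)=\{g:\sigma(g,v)\in F$ for all but finitely many $v\}$, $G(F,F')=G(F)\cap U(F')$. *)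

From mathcomp Require Import all_boot all_fingroup.
Set Implicit Arguments. Unset Strict Implicit. Unset Printing Implicit Defensive.

(* Model of the d-regular tree T_d with its legal edge colouring:
   vertices = reduced words over Omega = 'I_d (no two consecutive letters equal),
   edges = {w, rcons w a}, the edge {w, rcons w a} having colour a.
   Every vertex has exactly one incident edge of each colour. *)

Definition reduced (d : nat) (s : seq 'I_d) : bool := sorted (fun a b => a != b) s.

Definition vert (d : nat) := {s : seq 'I_d | reduced s}.

Definition col (d : nat) (u w : vert d) (a : 'I_d) : Prop :=
  val w = rcons (val u) a \/ val u = rcons (val w) a.

Definition adj (d : nat) (u w : vert d) : Prop := exists a, col u w a.

Definition is_aut (d : nat) (g : vert d -> vert d) : Prop :=
  bijective g /\ forall u w, adj u w <-> adj (g u) (g w).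

(* sigma(g,v) lies in the permutation group P: the local action
   c_{gv} o g_v o c_v^{-1} is (the function of) an element of P. *)
Definition sigma_in (d : nat) (g : vert d -> vert d) (v : vert d)
  (P : {set {perm 'I_d}}) : Prop :=
  exists2 p, p \in P & forall a w, col v w a -> col (g v) (g w) (p a).

Definition in_U (d : nat) (F' : {set {perm 'I_d}}) (g : vert d -> vert d) : Prop :=
  is_aut g /\ forall v, sigma_in g v F'.

Definition in_G (d : nat) (F : {set {perm 'I_d}}) (g : vert d -> vert d) : Prop :=
  is_aut g /\ exists S : seq (vert d), forall v, ~ sigma_in g v F -> v \in S.

Definition in_GFF (d : nat) (F F' : {set {perm 'I_d}}) (g : vert d -> vert d) : Prop :=
  in_G F g /\ in_U F' g.

Fixpoint walk (d : nat) (s : seq (vert d)) : Prop :=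
  match s with
  | x :: ((y :: _) as t) => adj x y /\ walk t
  | _ => True
  end.

Definition geodesic (d : nat) (s : seq (vert d)) : Prop :=
  exists x0 xs, s = x0 :: xs /\ walk s /\
    forall t, walk t -> forall y0 ys, t = y0 :: ys -> y0 = x0 ->
      last y0 ys = last x0 xs -> size s <= size t.

Definition preserves_orbits (d : nat) (F F' : {set {perm 'I_d}}) : Prop :=
  forall p x, p \in F' -> p x \in orbit 'P F x.

Definition two_transitive (d : nat) (P : {set {perm 'I_d}}) : Prop :=
  forall x y x' y' : 'I_d, x != y -> x' != y' ->
    exists2 p, p \in P & p x = x' /\ p y = y'.

(* Vertices are the reduced words of the free product of d copies of Z/2, which acts on T by
   colour-preserving automorphisms; these have trivial local action and so lie in G(F,F').
   Translating, both segments start at the root and become chains of prefixes of words u, u'.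
   An automorphism fixing the root may be built from any choice of local permutations
   sigma(w), subject only to sigma(w a)(a) = sigma(w)(a), the image colour of the edge between
   w and w a having already been fixed at w.  Along the prefixes of u we choose sigma(w) in F'
   sending the next letter of u to the next letter of u': this is possible by 2-transitivity,
   since consecutive letters differ.  Elsewhere we choose sigma(w) in F, which is possible
   because F' preserves the orbits of F.  Only the finitely many prefixes of u then carry a
   local action outside F. *)

From mathcomp Require Import all_boot all_fingroup zify.
From Stdlib Require Import Classical ClassicalEpsilon.
Set Implicit Arguments. Unset Strict Implicit. Unset Printing Implicit Defensive.

Section ReducedWords.
Variable d : nat.
Implicit Types (w : seq 'I_d) (a b c : 'I_d).

Lemma reduced_rcons2 w a b :
  reduced (rcons (rcons w b) a) = reduced (rcons w b) && (b != a).
Proof.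
case: w => [|y w]; first by rewrite /reduced /= andbT.
by rewrite /reduced /= rcons_path last_rcons.
Qed.

Lemma reduced_rcons w a : reduced (rcons w a) -> reduced w.
Proof. by case/lastP: w => [|w b] //; rewrite reduced_rcons2 => /andP[]. Qed.

Lemma reduced_nth_neq x0 w i : reduced w -> i.+1 < size w -> nth x0 w i != nth x0 w i.+1.
Proof. by move/(sortedP x0) => w_red /w_red. Qed.

(* Left multiplication by the generator [c] of the free product. *)
Definition lmul c w : seq 'I_d :=
  if w is x :: w' then (if x == c then w' else c :: w) else [:: c].

Lemma lmul_reduced c w : reduced w -> reduced (lmul c w).
Proof.
case: w => [|x w] //= Hr; case: ifP => [_|/negbT hx]; first exact: path_sorted Hr.
by rewrite /reduced /= eq_sym hx.
Qed.

Lemma lmulK c w : reduced w -> lmul c (lmul c w) = w.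
Proof.
case: w => [|x w] /=; first by rewrite eqxx.
case: ifP => [/eqP -> | hx] Hr /=; last by rewrite eqxx.
by case: w Hr => [|y w] //= /andP[hy _]; rewrite eq_sym (negbTE hy).
Qed.

Lemma lmul_rcons c w a :
  lmul c (rcons w a) = rcons (lmul c w) a \/ lmul c w = rcons (lmul c (rcons w a)) a.
Proof.
case: w => [|x w] /=; last by case: ifP => _; left.
by case: ifP => [/eqP -> | _]; [right | left].
Qed.

End ReducedWords.

Lemma inj_surj_bijective (T : Type) (f : T -> T) :
  injective f -> (forall y, exists x, f x = y) -> bijective f.
Proof.
move=> f_inj f_surj; pose g y := proj1_sig (constructive_indefinite_description _ (f_surj y)).
have gK : cancel g f by move=> y; rewrite /g; case: constructive_indefinite_description.
by exists g => // x; apply: f_inj; rewrite gK.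
Qed.

Section Automorphisms.
Variable d : nat.
Variables F F' : {group {perm 'I_d}}.
Implicit Types (g h : vert d -> vert d) (u v w : vert d).

Definition colour_preserving g := forall u w a, col u w a -> col (g u) (g w) a.

Lemma colour_preserving_aut g h : cancel g h -> cancel h g ->
  colour_preserving g -> colour_preserving h -> is_aut g.
Proof.
move=> gK hK cg ch; split; first by exists h.
move=> u w; split=> [[a /cg]|[a /ch]]; first by exists a.
by rewrite !gK; exists a.
Qed.

Lemma sigma_in_comp (P : {group {perm 'I_d}}) g h v :
  sigma_in g v P -> sigma_in h (g v) P -> sigma_in (h \o g) v P.
Proof.
case=> p pP gp [q qP hq]; exists (p * q)%g; first exact: groupM.
by move=> a w /gp /hq; rewrite permM.
Qed.

Lemma colour_preserving_GFF g : is_aut g -> colour_preserving g -> in_GFF F F' g.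
Proof.
move=> ag cg; have sigma1 (P : {group {perm 'I_d}}) v : sigma_in g v P.
  by exists 1%g; rewrite ?group1 // => a w /cg; rewrite perm1.
by split; split=> //; exists [::].
Qed.

Lemma is_aut_comp g h : is_aut g -> is_aut h -> is_aut (h \o g).
Proof.
case=> bg ag [bh ah]; split; first exact: bij_comp.
by move=> u w; rewrite ag ah.
Qed.

Lemma GFF_comp g h : in_GFF F F' g -> in_GFF F F' h -> in_GFF F F' (h \o g).
Proof.
case=> [[ag [Sg gS]] [_ gU]] [[ah [Sh hS]] [_ hU]].
split; split; [exact: is_aut_comp | | exact: is_aut_comp | by move=> v; apply: sigma_in_comp].
case: ag => [[g' gK _] _]; exists (Sg ++ map g' Sh) => v hv; rewrite mem_cat.
apply/orP; apply: NNPP => /not_or_and[vS gvT]; apply: hv.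
apply: sigma_in_comp; apply: NNPP; [move/gS | move/hS => /(map_f g')]; by rewrite ?gK.
Qed.

Definition lmulv c v : vert d := exist _ (lmul c (val v)) (lmul_reduced c (valP v)).

Lemma lmulvK c : involutive (lmulv c).
Proof. by move=> v; apply: val_inj; apply: lmulK (valP v). Qed.

Lemma lmulv_col c : colour_preserving (lmulv c).
Proof.
move=> u w a [] e; rewrite /col /= e; first exact: lmul_rcons.
by case: (lmul_rcons c (val w) a); [right | left].
Qed.

(* Multiplication by the letters of [s] from left to right, i.e. by the reverse of [s]; for
   [s = val v] it moves [v] to the root. *)
Definition translate (s : seq 'I_d) v : vert d := foldl (fun v c => lmulv c v) v s.

Lemma translateK s : cancel (translate s) (translate (rev s)).
Proof.
move=> v; rewrite /translate foldl_rev.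
by elim: s v => //= c s IH v; rewrite IH lmulvK.
Qed.

Lemma translate_revK s : cancel (translate (rev s)) (translate s).
Proof. by move=> v; have := translateK (rev s) v; rewrite revK. Qed.

Lemma translate_col s : colour_preserving (translate s).
Proof. by elim: s => //= c s IH u w a /(lmulv_col c); apply: IH. Qed.

Lemma translate_aut s : is_aut (translate s).
Proof.
exact: colour_preserving_aut (translateK s) (translate_revK s) (translate_col _) (translate_col _).
Qed.

Lemma translate_GFF s : in_GFF F F' (translate s).
Proof. exact: colour_preserving_GFF (translate_aut s) (translate_col s). Qed.

Lemma translate_root v : val (translate (val v) v) = [::].
Proof.
suff: forall s v, val v = s -> val (translate s v) = [::] by apply.
by elim=> [|c s IH] {}v ev //=; apply: IH; rewrite /= ev /= eqxx.
Qed.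
End Automorphisms.

Section Geodesics.
Variable d : nat.
Implicit Types (u v w V : vert d) (t xs : seq (vert d)) (g h : vert d -> vert d).

Lemma col_size u w a : col u w a ->
  size (val w) = (size (val u)).+1 \/ size (val u) = (size (val w)).+1.
Proof. by case=> ->; rewrite size_rcons; [left | right]. Qed.

Lemma walk_size v t : walk (v :: t) -> size (val (last v t)) <= size (val v) + size t.
Proof.
elim: t v => [|w t IH] v; first by rewrite addn0.
by case=> [[a /col_size hc] /IH] /=; case: hc => /= ->; lia.
Qed.

Lemma walk_prefixes v t : walk (v :: t) ->
  size (val (last v t)) = size (val v) + size t ->
  map val (v :: t) = [seq take k (val (last v t)) | k <- iota (size (val v)) (size t).+1].
Proof.
elim: t v => [|w t IH] v; first by rewrite /= addn0 take_size.
case=> [[a hc] hw]; rewrite [last _ _]/= => e; set L := last w t in e *.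
have le_w : size (val L) <= size (val w) + size t := walk_size hw.
have {}hc : val w = rcons (val v) a.
  by case: hc => // ev; move: e le_w; rewrite ev size_rcons /=; lia.
have sw : size (val w) = (size (val v)).+1 by rewrite hc size_rcons.
have /(IH _ hw) ew : size (val L) = size (val w) + size t.
  by move: e le_w; rewrite sw /=; lia.
rewrite map_cons ew sw; congr (_ :: _).
move: ew; rewrite sw => -[ew _].
by rewrite -(take_takel _ (leqnSn _)) -ew hc -cats1 take_size_cat.
Qed.

Definition prefix V k : vert d := exist _ (take k (val V)) (take_sorted k (valP V)).

Lemma walk_prefix V i n : i + n <= size (val V) ->
  walk [seq prefix V k | k <- iota i n.+1].
Proof.
elim: n i => [|n IH] i //= le_in; split; last by apply: IH; rewrite addSn -addnS.
have lt_i : i < size (val V) by apply: leq_trans le_in; rewrite addnS ltnS leq_addr.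
have x0 : 'I_d by case: (val V) lt_i.
by exists (nth x0 (val V) i); left; rewrite /= -take_nth.
Qed.

Lemma last_prefix V i n :
  last (prefix V i) [seq prefix V k | k <- iota i.+1 n] = prefix V (i + n).
Proof. by elim: n i => [|n IH] i /=; rewrite ?addn0 // IH addnS. Qed.

Lemma geodesic_from_root x ys : val x = [::] -> geodesic (x :: ys) ->
  size (val (last x ys)) = size ys /\
  x :: ys = [seq prefix (last x ys) k | k <- iota 0 (size ys).+1].
Proof.
move=> x_root [_ [_ [[<- <-] [hw minimal]]]]; set L := last x ys.
have le_L : size (val L) <= size ys by have := walk_size hw; rewrite x_root.
have le_ys : size ys <= size (val L).
  have := minimal _ (@walk_prefix L 0 (size (val L)) (leqnn _)) (prefix L 0) _ erefl.
  rewrite last_prefix size_map size_iota ltnS; apply.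
    by apply: val_inj; rewrite /= x_root take0.
  by apply: val_inj; rewrite /= take_size.
have eL : size (val L) = size ys by apply/eqP; rewrite eqn_leq le_L.
split=> //; apply: (inj_map val_inj); rewrite (walk_prefixes hw) x_root //.
by rewrite -map_comp.
Qed.

Lemma walk_map g t : (forall u w, adj u w -> adj (g u) (g w)) -> walk t -> walk (map g t).
Proof. by move=> ag; elim: t => [|x [|y t] IH] //= [/ag ? /IH]. Qed.

Lemma aut_geodesic g xs : is_aut g -> geodesic xs -> geodesic (map g xs).
Proof.
case=> [[h gK hK] ag] [x [ys [-> [hw minimal]]]].
have ah u w : adj u w -> adj (h u) (h w) by rewrite [X in _ -> X]ag !hK.
exists (g x), (map g ys); split=> //; split; first by apply: walk_map hw => u w /ag.
move=> t /(walk_map ah) ht y0 ys0 et ey el; subst; have := minimal _ ht (h (g x)) (map h ys0).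
by rewrite last_map el last_map !gK !size_map /=; apply; rewrite ?gK.
Qed.

Lemma geodesic_to_prefixes xs : geodesic xs -> exists s (U : vert d),
  size (val U) = (size xs).-1 /\ map (translate s) xs = [seq prefix U k | k <- iota 0 (size xs)].
Proof.
move=> gxs; have [x [ys [exs _]]] := gxs; subst xs.
have := aut_geodesic (translate_aut (val x)) gxs.
rewrite map_cons => /(geodesic_from_root (translate_root x)); rewrite size_map => -[eU ePre].
by exists (val x), (last (translate (val x) x) (map (translate (val x)) ys)); rewrite map_cons ePre.
Qed.

End Geodesics.

Section Relabel.
Variable d : nat.
Variable sigma : seq 'I_d -> {perm 'I_d}.
(* The edge from [rcons w a] back to [w] has colour [a] at both of its ends, so its image
   must receive the same colour from both local permutations. *)
Hypothesis sigma_back : forall w a, sigma (rcons w a) a = sigma w a.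
Implicit Types (w : seq 'I_d) (a : 'I_d).

(* The root-fixing automorphism with local action [sigma w] at [w]: the letter following the
   prefix [w] is recoloured by [sigma w]. *)
Fixpoint relabel_rev (r : seq 'I_d) : seq 'I_d :=
  if r is a :: r' then rcons (relabel_rev r') (sigma (rev r') a) else [::].

Definition relabel w := relabel_rev (rev w).

Lemma relabel_rcons w a : relabel (rcons w a) = rcons (relabel w) (sigma w a).
Proof. by rewrite /relabel rev_rcons /= revK. Qed.

Lemma size_relabel w : size (relabel w) = size w.
Proof. by elim/last_ind: w => // w a IH; rewrite relabel_rcons !size_rcons IH. Qed.

Lemma relabel_reduced w : reduced w -> reduced (relabel w).
Proof.
elim/last_ind: w => // w a IH; case/lastP: w IH => [|w b] // IH.
rewrite reduced_rcons2 !relabel_rcons reduced_rcons2 -relabel_rcons => /andP[/IH -> ba].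
by rewrite -(sigma_back w b) (inj_eq perm_inj).
Qed.

Lemma relabel_inj : injective relabel.
Proof.
move=> w1 w2 e; have := congr1 size e; rewrite !size_relabel.
elim/last_ind: w1 w2 e => [|w1 a1 IH] w2; first by case: w2.
case/lastP: w2 => [|w2 a2]; first by rewrite size_rcons.
rewrite !relabel_rcons !size_rcons => /rcons_inj[/IH e12 e] [/e12 ew]; subst w2.
by rewrite (perm_inj e).
Qed.

Lemma relabel_surj v : reduced v -> exists2 w, reduced w & relabel w = v.
Proof.
elim/last_ind: v => [|v b IH] hv; first by exists [::].
have [w hw ew] := IH (reduced_rcons hv).
exists (rcons w ((sigma w)^-1 b)%g); last by rewrite relabel_rcons ew permKV.
case/lastP: w hw ew => [|w c] // hw ew; rewrite reduced_rcons2 hw /=.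
apply: contraL hv => /eqP ec; rewrite -ew relabel_rcons reduced_rcons2 negb_and.
by apply/orP; right; rewrite negbK -(sigma_back w c) {2}ec permKV.
Qed.

Lemma relabel_eq_rcons w1 w2 c : relabel w2 = rcons (relabel w1) c -> exists a, w2 = rcons w1 a.
Proof.
case/lastP: w2 => [|w2 a]; first by move/(congr1 size); rewrite size_rcons.
by rewrite relabel_rcons => /rcons_inj[/relabel_inj -> _]; exists a.
Qed.

Definition relabelv (v : vert d) : vert d := exist _ (relabel (val v)) (relabel_reduced (valP v)).

Lemma relabelv_col u v a : col u v a -> col (relabelv u) (relabelv v) (sigma (val u) a).
Proof. by case=> e; [left | right]; rewrite /= e relabel_rcons ?sigma_back. Qed.

Lemma relabelv_aut : is_aut relabelv.
Proof.
split.
  apply: inj_surj_bijective => [u v /(congr1 val) /relabel_inj /val_inj // | v].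
  by have [w hw ew] := relabel_surj (valP v); exists (exist _ w hw); apply: val_inj.
move=> u v; split=> [[a /relabelv_col h] | [c []]]; first by exists (sigma (val u) a).
  by case/relabel_eq_rcons=> a e; exists a; left.
by case/relabel_eq_rcons=> a e; exists a; right.
Qed.

Lemma relabelv_sigma_in (P : {set {perm 'I_d}}) v : sigma (val v) \in P -> sigma_in relabelv v P.
Proof. by exists (sigma (val v)) => // a w /relabelv_col. Qed.

Lemma relabelv_GFF (F F' : {set {perm 'I_d}}) : (forall w, sigma w \in F') ->
  (exists S : seq (seq 'I_d), forall w, sigma w \notin F -> w \in S) -> in_GFF F F' relabelv.
Proof.
move=> sF' [S sF]; do 2!split; try exact: relabelv_aut; last by move=> v; apply: relabelv_sigma_in.
exists (pmap insub S) => v hv; rewrite mem_pmap_sub; apply: sF.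
by apply/negP => /relabelv_sigma_in.
Qed.

End Relabel.

Definition pick_in (gT : finGroupType) (G : {group gT}) (P : pred gT) : gT :=
  odflt 1%g [pick q in G | P q].

Lemma pick_in_group (gT : finGroupType) (G : {group gT}) P : pick_in G P \in G.
Proof. by rewrite /pick_in; case: pickP => [q /andP[]|] //=; rewrite group1. Qed.

Lemma pick_inP (gT : finGroupType) (G : {group gT}) (P : pred gT) q :
  q \in G -> P q -> P (pick_in G P).
Proof. by move=> qG Pq; rewrite /pick_in; case: pickP => [q' /andP[] | /(_ q)] //=; rewrite qG Pq. Qed.

Lemma ord_neq d (x : 'I_d) : 1 < d -> exists y : 'I_d, x != y.
Proof.
move=> d_gt1; have d_gt0 : 0 < d by apply: ltnW.
have [/eqP x0|] := boolP (x == Ordinal d_gt0); last by exists (Ordinal d_gt0).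
by exists (Ordinal d_gt1); rewrite x0.
Qed.

Lemma two_transitive_transitive d (P : {set {perm 'I_d}}) : 1 < d -> two_transitive P ->
  forall x y : 'I_d, exists2 p, p \in P & p x = y.
Proof.
move=> d_gt1 P2 x y; have [x' x'x] := ord_neq x d_gt1; have [y' y'y] := ord_neq y d_gt1.
by have [p pP [px _]] := P2 x x' y y' x'x y'y; exists p.
Qed.

Section PathAdapted.
Variable d : nat.
Variables F F' : {group {perm 'I_d}}.
Hypothesis sFF' : F \subset F'.
Hypothesis F'_orbits : preserves_orbits F F'.
Hypothesis F'_2trans : two_transitive F'.
Hypothesis d_gt1 : 1 < d.
Variable x0 : 'I_d.
Variables U U' : vert d.
Hypothesis size_u' : size (val U') = size (val U).
Implicit Types (w : seq 'I_d) (a : 'I_d) (p : {perm 'I_d}).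

Local Notation u := (val U).
Local Notation u' := (val U').
Local Notation m := (size u).

Definition on_path w := (size w < m) && (w == take (size w) u).

Lemma on_path_take k : k < m -> on_path (take k u).
Proof. by move=> lt_km; rewrite /on_path size_takel ?(ltnW lt_km) // lt_km eqxx. Qed.

Lemma on_path_rcons w a : on_path (rcons w a) ->
  [/\ (size w).+1 < m, w = take (size w) u & a = nth x0 u (size w)].
Proof.
rewrite /on_path size_rcons => /andP[lt_wm /eqP].
by rewrite (take_nth x0 (ltnW lt_wm)) => /rcons_inj[<- <-].
Qed.

Definition next_perm w a p : {perm 'I_d} :=
  let k := (size w).+1 in
  if on_path (rcons w a) then
    pick_in F' (fun q => (q a == p a) && (q (nth x0 u k) == nth x0 u' k))
  else pick_in F (fun q => q a == p a).

Definition root_perm : {perm 'I_d} := pick_in F' (fun q => q (nth x0 u 0) == nth x0 u' 0).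

Fixpoint path_sigma_rev (r : seq 'I_d) : {perm 'I_d} :=
  if r is a :: r' then next_perm (rev r') a (path_sigma_rev r') else root_perm.

Definition path_sigma w := path_sigma_rev (rev w).

Lemma path_sigma_rcons w a : path_sigma (rcons w a) = next_perm w a (path_sigma w).
Proof. by rewrite /path_sigma rev_rcons /= revK. Qed.

Lemma path_sigma_F' w : path_sigma w \in F'.
Proof.
case/lastP: w => [|w a]; first exact: pick_in_group.
rewrite path_sigma_rcons /next_perm; case: ifP => _; first exact: pick_in_group.
exact/(subsetP sFF')/pick_in_group.
Qed.

Lemma path_sigma_notF w : path_sigma w \notin F -> w \in [seq take k u | k <- iota 0 m.+1].
Proof.
case/lastP: w => [|w a]; first by move=> _; apply/mapP; exists 0; rewrite ?take0.
rewrite path_sigma_rcons /next_perm; case: ifP => [|_]; last by rewrite pick_in_group.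
case/andP=> lt_m /eqP e _; apply/mapP; exists (size (rcons w a)) => //.
by rewrite mem_iota add0n ltnS; apply: ltnW.
Qed.

Lemma next_perm_on_path w a p : on_path (rcons w a) -> p a = nth x0 u' (size w) ->
  next_perm w a p a = p a /\ next_perm w a p (nth x0 u (size w).+1) = nth x0 u' (size w).+1.
Proof.
move=> onp pa; have [lt_m _ ea] := on_path_rcons onp.
have neq_u : a != nth x0 u (size w).+1 by rewrite ea; apply: reduced_nth_neq (valP U) _.
have neq_u' : p a != nth x0 u' (size w).+1.
  by rewrite pa; apply: reduced_nth_neq (valP U') _; rewrite size_u'.
have [r rF' [ra rnext]] := F'_2trans neq_u neq_u'; rewrite /next_perm onp.
set k := (size w).+1 in rnext *.
have := pick_inP (P := fun q : {perm 'I_d} => (q a == p a) && (q (nth x0 u k) == nth x0 u' k)) rF'.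
by rewrite ra rnext !eqxx => /(_ isT) /andP[/eqP -> /eqP ->].
Qed.

Lemma path_sigma_path k : k < m -> path_sigma (take k u) (nth x0 u k) = nth x0 u' k.
Proof.
elim: k => [|k IH] lt_km.
  have [r rF' r0] := two_transitive_transitive d_gt1 F'_2trans (nth x0 u 0) (nth x0 u' 0).
  have := pick_inP (P := fun q : {perm 'I_d} => q (nth x0 u 0) == nth x0 u' 0) rF'.
  by rewrite take0 r0 eqxx => /(_ isT) /eqP.
have lt_k := ltnW lt_km; have onp := on_path_take lt_km.
rewrite (take_nth x0 lt_k) in onp *; rewrite path_sigma_rcons.
have pk : path_sigma (take k u) (nth x0 u k) = nth x0 u' (size (take k u)).
  by rewrite size_takel ?(ltnW lt_k) //; apply: IH.
by have [_] := next_perm_on_path onp pk; rewrite size_takel ?(ltnW lt_k).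
Qed.

Lemma path_sigma_back w a : path_sigma (rcons w a) a = path_sigma w a.
Proof.
rewrite path_sigma_rcons; case onp: (on_path (rcons w a)).
  have [lt_m ew ea] := on_path_rcons onp.
  have pa : path_sigma w a = nth x0 u' (size w) by rewrite {1}ew ea path_sigma_path // (ltnW lt_m).
  by have [] := next_perm_on_path onp pa.
have /orbitP[q qF qa] := F'_orbits a (path_sigma_F' w).
have := pick_inP (P := fun q : {perm 'I_d} => q a == path_sigma w a) qF.
by rewrite /next_perm onp -qa eqxx => /(_ isT) /eqP.
Qed.

Lemma relabel_path_prefix k : k <= m -> relabel path_sigma (take k u) = take k u'.
Proof.
elim: k => [|k IH] lt_km; first by rewrite !take0.
rewrite (take_nth x0 lt_km) relabel_rcons IH ?(ltnW lt_km) // path_sigma_path //.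
by rewrite -take_nth // size_u'.
Qed.

Lemma path_aut : exists2 h, in_GFF F F' h & forall k, k <= m -> h (prefix U k) = prefix U' k.
Proof.
exists (relabelv path_sigma_back) => [|k le_km]; last exact/val_inj/relabel_path_prefix.
apply: relabelv_GFF => [w|]; first exact: path_sigma_F'.
by eexists; apply: path_sigma_notF.
Qed.

End PathAdapted.

Theorem mainTheorem7 (d : nat) (F F' : {group {perm 'I_d}}) :
  3 <= d ->
  F \subset F' ->
  preserves_orbits F F' ->
  two_transitive F' ->
  forall (n : nat) (xs xs' : seq (vert d)),
    size xs = n -> size xs' = n ->
    geodesic xs -> geodesic xs' ->
    exists g : vert d -> vert d, in_GFF F F' g /\ map g xs = xs'.
Proof.
move=> d_gt2 sFF' F'_orbits F'_2trans n xs xs' size_xs size_xs' gxs gxs'.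
have d_gt1 : 1 < d := ltnW d_gt2.
have x0 : 'I_d := Ordinal (ltnW d_gt1).
have [s [U [size_U eU]]] := geodesic_to_prefixes gxs.
have [s' [U' [size_U' eU']]] := geodesic_to_prefixes gxs'.
have size_UU' : size (val U') = size (val U) by rewrite size_U size_U' size_xs size_xs'.
have [h hGFF h_prefix] := path_aut sFF' F'_orbits F'_2trans d_gt1 x0 size_UU'.
exists (translate (rev s') \o h \o translate s); split.
  exact: GFF_comp (GFF_comp (translate_GFF F F' s) hGFF) (translate_GFF F F' _).
rewrite 2!map_comp eU -(mapK (translateK s') xs') eU'; congr map.
rewrite -map_comp size_xs' -size_xs; apply/eq_in_map => k; rewrite mem_iota add0n => lt_k.
by apply: h_prefix; rewrite size_U; lia.
Qed.
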